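(* Let $\theta^k\in\mathcal F$ and let $\theta^{k+1}$ be obtained from $\theta^k$ by one iteration of the generalized SMO algorithm (with $\Delta^k>\tau\ge0$). (a) If the block $\alpha$ is selected with pair $(i,j)$, then $\alpha^{k+1}\neq\alpha^k$ and $(i,j)$ is not a violating pair at $\theta^{k+1}$, i.e. it is neither the case that [$i\in I_{up}(\alpha^{k+1})$, $j\in I_{low}(\alpha^{k+1})$ and $\nabla_{\alpha_i}f(\theta^{k+1})<\nabla_{\alpha_j}f(\theta^{k+1})$], nor that [$i\in I_{low}(\alpha^{k+1})$, $j\in I_{up}(\alpha^{k+1})$ and $\nabla_{\alpha_i}f(\theta^{k+1})>\nabla_{\alpha_j}f(\theta^{k+1})$]. The analogous statement holds for the block $\alpha^*$ with pair $(i^*,j^* )$ and index sets $I^*_{up},I^*_{low}$. (b) If the block $\gamma$ is selected with index $u$, then $\nabla_{\gamma_u}f(\theta^{k+1})\ge0$. (c) If the block $\mu$ is selected with index $u$, then $\nabla_{\mu_u}f(\theta^{k+1})=0$.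
   Context: Setup. Let $n,p,k_1,k_2\ge1$, $X\in\mathbb{R}^{n\times p}$ with rows $X_{i:}$, $y\in\mathbb{R}^n$, $C>0$, $\nu\in(0,1]$, $A\in\mathbb{R}^{k_1\times p}$, $b\in\mathbb{R}^{k_1}$, $\Gamma\in\mathbb{R}^{k_2\times p}$, $d\in\mathbb{R}^{k_2}$; $\mathbf e$ is the all-ones vector and $Q=XX^T\in\mathbb{R}^{n\times n}$. Dual variables are $\theta=(\alpha,\alpha^*,\gamma,\mu)\in\mathbb{R}^n\times\mathbb{R}^n\times\mathbb{R}^{k_1}\times\mathbb{R}^{k_2}$. Let $M$ be the $(2n+k_1+k_2)\times p$ matrix with row blocks $X,-X,A,-\Gamma$, $\bar Q=MM^T$, $l=(y,-y,b,-d)$, and $f(\theta)=\frac12\theta^T\bar Q\theta+l^T\theta$; equivalently $f(\theta)=\frac12\|\beta(\theta)\|^2+y^T(\alpha-\alpha^* )+b^T\gamma-d^T\mu$ with $\beta(\theta)=-\sum_{i=1}^n(\alpha_i-\alpha_i^* )X_{i:}-A^T\gamma+\Gamma^T\mu$. The feasible set $\mathcal F$ consists of $\theta$ with $0\le\alpha_i,\alpha_i^*\le C/n$ for all $i$, $\mathbf e^T(\alpha+\alpha^* )\le C\nu$, $\mathbf e^T(\alpha-\alpha^* )=0$, $\gamma_j\ge0$ for all $j$. Generalized SMO algorithm. Assume the rows of $X$ are pairwise distinct and no row of $A$ or $\Gamma$ is zero. Let $I_{up}(\alpha)=\{i:\alpha_i<C/n\}$, $I_{low}(\alpha)=\{i:\alpha_i>0\}$,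 and $I^*_{up},I^*_{low}$ the same sets for $\alpha^*$. Fix $\tau\ge0$ and $\theta^0\in\mathcal F$. At iteration $k$, with all gradients evaluated at $\theta^k$: pick $i\in\arg\min_{I_{up}(\alpha^k)}\nabla_{\alpha_i}f$, $j\in\arg\max_{I_{low}(\alpha^k)}\nabla_{\alpha_j}f$ and set $\Delta_1=\max(\nabla_{\alpha_j}f-\nabla_{\alpha_i}f,0)$ ($\Delta_1=0$ if either set is empty); define $i^*,j^*,\Delta_2$ identically for $\alpha^*$; $\Delta_3=\max(-\min_{s}\nabla_{\gamma_s}f,0)$; $\Delta_4=\max_s|\nabla_{\mu_s}f|$; $\Delta^k=\max(\Delta_1,\Delta_2,\Delta_3,\Delta_4)$. If $\Delta^k\le\tau$ stop; otherwise update the first block (in the order $\alpha,\alpha^*,\gamma,\mu$) whose $\Delta_m$ equals $\Delta^k$, leaving all other coordinates unchanged: Block $\alpha$: $t_q=-\frac{\nabla_{\alpha_i}f-\nabla_{\alpha_j}f}{Q_{ii}+Q_{jj}-2Q_{ij}}$, $I_1=\max(-\alpha_i^k,\alpha_j^k-C/n)$, $I_2=\min(\alpha_j^k,C/n-\alpha_i^k)$, $t^*=\min(\max(I_1,t_q),I_2)$, $\alpha_i^{k+1}=\alpha_i^k+t^*$, $\alpha_j^{k+1}=\alpha_j^k-t^*$. Block $\alpha^*$: the same formulas with $\alpha^*$, $(i^*,j^* )$, $\nabla_{\alpha^*}f$ and the same matrix $Q$. Block $\gamma$: $u\in\arg\min_s\nabla_{\gamma_s}f$, $\gamma_u^{k+1}=\max\big(\gamma_u^k-\nabla_{\gamma_u}f/(AA^T)_{uu},0\big)$.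 Block $\mu$: $u\in\arg\max_s|\nabla_{\mu_s}f|$, $\mu_u^{k+1}=\mu_u^k-\nabla_{\mu_u}f/(\Gamma\Gamma^T)_{uu}$. *)

(* The scalars range over an arbitrary real field R
   (the paper's setting is R = the real numbers). *)
From HB Require Import structures.
From mathcomp Require Import all_boot all_order all_algebra.
Set Implicit Arguments. Unset Strict Implicit. Unset Printing Implicit Defensive.
Import Order.TTheory GRing.Theory Num.Theory.
Local Open Scope ring_scope.

Record svm_data (R : realFieldType) (n p k1 k2 : nat) := SvmData {
  dX : 'M[R]_(n, p);
  dy : 'cV[R]_n;
  dA : 'M[R]_(k1, p);
  db : 'cV[R]_k1;
  dG : 'M[R]_(k2, p);
  dd : 'cV[R]_k2;
  dC : R;
  dnu : R }.

Record dual (R : realFieldType) (n k1 k2 : nat) := Dual {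
  al : 'cV[R]_n;
  als : 'cV[R]_n;
  ga : 'cV[R]_k1;
  mu : 'cV[R]_k2 }.

Inductive block (n k1 k2 : nat) :=
| BAl of 'I_n & 'I_n
| BAls of 'I_n & 'I_n
| BGa of 'I_k1
| BMu of 'I_k2.

Section SMO.
Variables (R : realFieldType) (n p k1 k2 : nat) (D : svm_data R n p k1 k2).

Local Notation X := (dX D). Local Notation y := (dy D).
Local Notation A := (dA D). Local Notation b := (db D).
Local Notation G := (dG D). Local Notation d := (dd D).
Local Notation C := (dC D). Local Notation nu := (dnu D).
Local Notation theta := (dual R n k1 k2).

Definition beta (th : theta) : 'cV[R]_p :=
  - (X^T *m (al th - als th)) - A^T *m ga th + G^T *m mu th.

Definition Qm : 'M[R]_n := X *m X^T.

Definition fobj (th : theta) : R :=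
  2^-1 * ((beta th)^T *m beta th) ord0 ord0
  + (y^T *m (al th - als th)) ord0 ord0 + (b^T *m ga th) ord0 ord0
  - (d^T *m mu th) ord0 ord0.

(* Block components of the gradient  grad f(theta) = Qbar theta + l,
   with Qbar = M M^T, M = [X; -X; A; -Gamma], l = (y, -y, b, -d);
   since M^T theta = - beta(theta), grad f = l - M beta(theta). *)
Definition grad_al (th : theta) : 'cV[R]_n := y - X *m beta th.
Definition grad_als (th : theta) : 'cV[R]_n := - y + X *m beta th.
Definition grad_ga (th : theta) : 'cV[R]_k1 := b - A *m beta th.
Definition grad_mu (th : theta) : 'cV[R]_k2 := - d + G *m beta th.

Definition feasible (th : theta) : Prop :=
  [/\ forall i, 0 <= al th i ord0 <= C / n%:R,
      forall i, 0 <= als th i ord0 <= C / n%:R,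
      \sum_i (al th i ord0 + als th i ord0) <= C * nu,
      \sum_i (al th i ord0 - als th i ord0) = 0
    & forall s, 0 <= ga th s ord0].

Definition Iup (v : 'cV[R]_n) : pred 'I_n := fun i => v i ord0 < C / n%:R.
Definition Ilow (v : 'cV[R]_n) : pred 'I_n := fun i => 0 < v i ord0.

Definition min_on (I : finType) (P : pred I) (g : I -> R) : option R :=
  match [pick i | P i] with
  | Some i0 => Some (\big[Num.min/g i0]_(i | P i) g i)
  | None => None
  end.
Definition max_on (I : finType) (P : pred I) (g : I -> R) : option R :=
  match [pick i | P i] with
  | Some i0 => Some (\big[Num.max/g i0]_(i | P i) g i)
  | None => None
  end.

Definition is_argmin (I : finType) (P : pred I) (g : I -> R) (i : I) : Prop :=
  P i /\ forall i', P i' -> g i <= g i'.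
Definition is_argmax (I : finType) (P : pred I) (g : I -> R) (i : I) : Prop :=
  P i /\ forall i', P i' -> g i' <= g i.

Definition Delta_pair (v g : 'cV[R]_n) : R :=
  match min_on (Iup v) (fun i => g i ord0), max_on (Ilow v) (fun j => g j ord0) with
  | Some m, Some M => Num.max (M - m) 0
  | _, _ => 0
  end.

Definition Delta1 (th : theta) : R := Delta_pair (al th) (grad_al th).
Definition Delta2 (th : theta) : R := Delta_pair (als th) (grad_als th).
Definition Delta3 (th : theta) : R :=
  match min_on predT (fun s => grad_ga th s ord0) with
  | Some m => Num.max (- m) 0
  | None => 0
  end.
Definition Delta4 (th : theta) : R :=
  \big[Num.max/0]_(s < k2) `|grad_mu th s ord0|.
Definition Delta (th : theta) : R :=
  Num.max (Num.max (Delta1 th) (Delta2 th)) (Num.max (Delta3 th) (Delta4 th)).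

Definition pair_update (v g : 'cV[R]_n) (i j : 'I_n) : 'cV[R]_n :=
  let tq := - (g i ord0 - g j ord0) / (Qm i i + Qm j j - 2 * Qm i j) in
  let I1 := Num.max (- v i ord0) (v j ord0 - C / n%:R) in
  let I2 := Num.min (v j ord0) (C / n%:R - v i ord0) in
  let ts := Num.min (Num.max I1 tq) I2 in
  \col_l (if l == i then v i ord0 + ts
          else if l == j then v j ord0 - ts else v l ord0).

(* One iteration of generalized SMO from th to th', not stopping
   (Delta > tau), selecting block c (the first block attaining Delta). *)
Definition smo_step (tau : R) (th : theta) (c : block n k1 k2) (th' : theta) : Prop :=
  tau < Delta th /\
  match c with
  | BAl i j =>
      [/\ Delta1 th = Delta th,
          is_argmin (Iup (al th)) (fun l => grad_al th l ord0) i,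
          is_argmax (Ilow (al th)) (fun l => grad_al th l ord0) j
        & th' = Dual (pair_update (al th) (grad_al th) i j) (als th) (ga th) (mu th)]
  | BAls i j =>
      [/\ Delta1 th <> Delta th, Delta2 th = Delta th,
          is_argmin (Iup (als th)) (fun l => grad_als th l ord0) i,
          is_argmax (Ilow (als th)) (fun l => grad_als th l ord0) j
        & th' = Dual (al th) (pair_update (als th) (grad_als th) i j) (ga th) (mu th)]
  | BGa u =>
      [/\ Delta1 th <> Delta th, Delta2 th <> Delta th, Delta3 th = Delta th,
          is_argmin predT (fun s => grad_ga th s ord0) u
        & th' = Dual (al th) (als th)
                  (\col_s (if s == u then
                             Num.max (ga th u ord0 - grad_ga th u ord0 / (A *m A^T) u u) 0
                           else ga th s ord0))
                  (mu th)]
  | BMu u =>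
      [/\ [/\ Delta1 th <> Delta th, Delta2 th <> Delta th & Delta3 th <> Delta th],
          Delta4 th = Delta th,
          is_argmax predT (fun s => `|grad_mu th s ord0|) u
        & th' = Dual (al th) (als th) (ga th)
                  (\col_s (if s == u then
                             mu th u ord0 - grad_mu th u ord0 / (G *m G^T) u u
                           else mu th s ord0))]
  end.

Definition violating (v g : 'cV[R]_n) (i j : 'I_n) : Prop :=
  (Iup v i /\ Ilow v j /\ g i ord0 < g j ord0) \/
  (Ilow v i /\ Iup v j /\ g j ord0 < g i ord0).

End SMO.

From HB Require Import structures.
From mathcomp Require Import all_boot all_order all_algebra.
From mathcomp Require Import ring.

Set Implicit Arguments.
Unset Strict Implicit.
Unset Printing Implicit Defensive.

Import Order.TTheory GRing.Theory Num.Theory.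
Local Open Scope ring_scope.

(* f is quadratic with Hessian Qbar = M M^T, so changing one block of theta by
   [delta] changes the gradient of that block by its Gram matrix times [delta].
   The gamma and mu updates are (projected) exact Newton steps along one
   coordinate, which zero the partial derivative, or make it nonnegative when
   the projection onto gamma_u >= 0 is active.  The alpha update moves along
   e_i - e_j with the Newton step clipped to the box; since i and j form a
   violating pair the step is positive, so alpha changes.  If the clip is
   inactive, the gradients at i and j become equal; otherwise the new point
   leaves I_up at i or I_low at j, while the sign of the gradient gap is
   unchanged, so (i, j) is not violating either way.  Distinct rows of X make
   the curvature Q_ii + Q_jj - 2 Q_ij along e_i - e_j positive, and nonzero rows
   of A and Gamma the diagonal Gram entries used by the coordinate steps. *)

Lemma sum_sqr_row_gt0 (R : realDomainType) (p : nat) (w : 'rV[R]_p) :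
  w != 0 -> 0 < \sum_k w 0 k ^+ 2.
Proof.
move=> w_neq0; have sqr_entry_ge0 k : 0 <= w 0 k ^+ 2 by apply: sqr_ge0.
rewrite lt_def sumr_ge0 // andbT; apply: contra w_neq0 => /eqP sum0.
apply/eqP/rowP => k; apply/eqP; rewrite mxE -sqrf_eq0.
by rewrite (psumr_eq0P _ sum0).
Qed.

Section Gram.
Variables (R : realDomainType) (m p : nat) (M : 'M[R]_(m, p)).

Lemma gram_sym a b : (M *m M^T) a b = (M *m M^T) b a.
Proof. by rewrite !mxE; apply: eq_bigr => k _; rewrite !mxE mulrC. Qed.

Lemma gram_diag_gt0 u : row u M != 0 -> 0 < (M *m M^T) u u.
Proof.
move=> /sum_sqr_row_gt0; congr (0 < _).
by rewrite !mxE; apply: eq_bigr => k _; rewrite !mxE expr2.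
Qed.

Lemma gram_pair_gt0 i j : row i M != row j M ->
  0 < (M *m M^T) i i + (M *m M^T) j j - 2 * (M *m M^T) i j.
Proof.
rewrite -subr_eq0 => /sum_sqr_row_gt0; congr (0 < _).
rewrite !mxE mulr_sumr -big_split -sumrB /=.
by apply: eq_bigr => k _; rewrite !mxE; ring.
Qed.

End Gram.

Section Extrema.
Variables (R : realFieldType) (I : finType) (P : pred I) (g : I -> R).

Lemma argmin_le_min_on i m : is_argmin P g i -> min_on P g = Some m -> g i <= m.
Proof.
rewrite /min_on => -[_ gi_min]; case: pickP => // i0 Pi0 [<-].
apply: (big_ind (fun x => g i <= x)) => [|x y|//]; first exact: gi_min.
by rewrite le_min => -> ->.
Qed.

Lemma max_on_le_argmax j M : is_argmax P g j -> max_on P g = Some M -> M <= g j.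
Proof.
rewrite /max_on => -[_ gj_max]; case: pickP => // j0 Pj0 [<-].
apply: (big_ind (fun x => x <= g j)) => [|x y|//]; first exact: gj_max.
by rewrite ge_max => -> ->.
Qed.

End Extrema.

Section GradientUpdate.
Variables (R : realFieldType) (n p k1 k2 : nat) (D : svm_data R n p k1 k2).
Local Notation X := (dX D). Local Notation A := (dA D). Local Notation G := (dG D).

Lemma betaB (th1 th2 : dual R n k1 k2) :
  beta D th1 - beta D th2 =
  - (X^T *m (al th1 - al th2)) + X^T *m (als th1 - als th2)
  - A^T *m (ga th1 - ga th2) + G^T *m (mu th1 - mu th2).
Proof.
rewrite /beta !mulmxBr.
move: (X^T *m _) (X^T *m _) (X^T *m _) (X^T *m _) => a1 s1 a2 s2.
move: (A^T *m _) (A^T *m _) (G^T *m _) (G^T *m _) => g1 g2 m1 m2.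
by apply/matrixP => r c; rewrite !mxE; ring.
Qed.

Variable th : dual R n k1 k2.

Lemma grad_al_update v :
  grad_al D (Dual v (als th) (ga th) (mu th)) = grad_al D th + Qm D *m (v - al th).
Proof.
rewrite /grad_al -[beta D _](subrK (beta D th)) betaB /= !subrr !mulmx0.
by rewrite !addr0 !subr0 mulmxDr mulmxN opprD opprK addrA addrAC mulmxA.
Qed.

Lemma grad_als_update v :
  grad_als D (Dual (al th) v (ga th) (mu th)) = grad_als D th + Qm D *m (v - als th).
Proof.
rewrite /grad_als -[beta D _](subrK (beta D th)) betaB /= !subrr !mulmx0.
by rewrite oppr0 !add0r ?addr0 ?subr0 mulmxDr addrA addrAC mulmxA.
Qed.

Lemma grad_ga_update w :
  grad_ga D (Dual (al th) (als th) w (mu th)) = grad_ga D th + (A *m A^T) *m (w - ga th).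
Proof.
rewrite /grad_ga -[beta D _](subrK (beta D th)) betaB /= !subrr !mulmx0.
by rewrite oppr0 !add0r ?addr0 ?subr0 mulmxDr mulmxN opprD opprK addrA addrAC mulmxA.
Qed.

Lemma grad_mu_update w :
  grad_mu D (Dual (al th) (als th) (ga th) w) = grad_mu D th + (G *m G^T) *m (w - mu th).
Proof.
rewrite /grad_mu -[beta D _](subrK (beta D th)) betaB /= !subrr !mulmx0.
by rewrite oppr0 !add0r ?addr0 ?subr0 mulmxDr addrA addrAC mulmxA.
Qed.
End GradientUpdate.

Section PairUpdate.
Variables (R : realFieldType) (n p k1 k2 : nat) (D : svm_data R n p k1 k2).
Variables (v g : 'cV[R]_n) (i j : 'I_n).
Local Notation C := (dC D).
Local Notation Q := (Qm D).
Local Notation eta := (Q i i + Q j j - 2 * Q i j).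
Local Notation tq := (- (g i ord0 - g j ord0) / eta).
Local Notation I2 := (Num.min (v j ord0) (C / n%:R - v i ord0)).

Definition pair_step : R :=
  Num.min (Num.max (Num.max (- v i ord0) (v j ord0 - C / n%:R)) tq) I2.

Local Notation t := pair_step.

Lemma pair_updateE : i != j ->
  pair_update D v g i j = v + t *: (delta_mx i 0 - delta_mx j 0).
Proof.
move=> i_neq_j; rewrite /pair_update -/pair_step; move: pair_step => s.
apply/matrixP => l c; rewrite (ord1 c) !mxE /= !eqxx !andbT.
case: (eqVneq l i) => [->|_]; first by rewrite (negbTE i_neq_j) /=; ring.
by case: (eqVneq l j) => [->|_] /=; ring.
Qed.

Hypothesis v_box : forall l, 0 <= v l ord0 <= C / n%:R.
Hypothesis i_up : Iup D v i.
Hypothesis j_low : Ilow v j.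
Hypothesis grad_gap : g i ord0 < g j ord0.
Hypothesis eta_gt0 : 0 < eta.

Let i_neq_j : i != j.
Proof. by apply/eqP => i_eq_j; move: grad_gap; rewrite i_eq_j ltxx. Qed.

(* The lower clip never binds: it is <= 0 on the box, while tq > 0. *)
Lemma pair_stepE : t = Num.min tq I2.
Proof.
have tq_gt0 : 0 < tq by rewrite divr_gt0 // oppr_gt0 subr_lt0.
have I1_le0 : Num.max (- v i ord0) (v j ord0 - C / n%:R) <= 0.
  rewrite ge_max oppr_le0 subr_le0.
  by case/andP: (v_box i) => -> _; case/andP: (v_box j).
by rewrite /pair_step (max_r (le_trans I1_le0 (ltW tq_gt0))).
Qed.

Lemma pair_step_gt0 : 0 < t.
Proof.
move: i_up j_low; rewrite /Iup /Ilow => vi_lt vj_gt0.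
by rewrite pair_stepE lt_min divr_gt0 // ?oppr_gt0 ?subr_lt0 // lt_min vj_gt0 subr_gt0.
Qed.

Lemma pair_update_neq : pair_update D v g i j <> v.
Proof.
rewrite pair_updateE // => /matrixP/(_ i ord0)/eqP.
rewrite !mxE !eqxx (negbTE i_neq_j) subr0 mulr1 -subr_eq0 addrAC subrr add0r.
by rewrite gt_eqF // pair_step_gt0.
Qed.

Lemma pair_update_grad (r : 'I_n) :
  (g + Q *m (pair_update D v g i j - v)) r ord0 = g r ord0 + t * (Q r i - Q r j).
Proof.
by rewrite pair_updateE // [v + _ - v]addrAC subrr add0r -scalemxAr mulmxBr -!colE !mxE.
Qed.

Lemma pair_update_not_violating :
  ~ violating D (pair_update D v g i j) (g + Q *m (pair_update D v g i j - v)) i j.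
Proof.
set v' := pair_update D v g i j; set g' := g + Q *m (v' - v).
have gap' : g' i ord0 - g' j ord0 = g i ord0 - g j ord0 + t * eta.
  by rewrite !pair_update_grad /Qm (gram_sym _ j i); ring.
have gap_tq : g i ord0 - g j ord0 + tq * eta = 0 by rewrite divfK ?gt_eqF //; ring.
have [tq_le|I2_lt] := leP tq I2.
  have g'_eq : g' i ord0 = g' j ord0.
    by apply/eqP; rewrite -subr_eq0 gap' pair_stepE (min_l tq_le) gap_tq.
  by rewrite /violating g'_eq ltxx => -[[_ []]|[_ []]].
have t_eq : t = I2 by rewrite pair_stepE (min_r (ltW I2_lt)).
have g'_lt : g' i ord0 < g' j ord0.
  by rewrite -subr_lt0 gap' -gap_tq ltrD2l t_eq ltr_pM2r.
have [v'i v'j] : v' i ord0 = v i ord0 + t /\ v' j ord0 = v j ord0 - t.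
  rewrite /v' !pair_updateE // !mxE !eqxx !andbT [j == i]eq_sym (negbTE i_neq_j) /=.
  by split; ring.
rewrite /violating /Iup /Ilow v'i v'j t_eq.
case=> [[up_i [low_j _]]|[_ [_ /(lt_trans g'_lt)]]]; last by rewrite ltxx.
have I2_lt_vj : I2 < v j ord0 by rewrite -subr_gt0.
have I2_lt_cap : I2 < C / n%:R - v i ord0 by rewrite ltrBrDl.
by move: (lt_min I2 (v j ord0) (C / n%:R - v i ord0)); rewrite ltxx I2_lt_vj I2_lt_cap.
Qed.
End PairUpdate.

Section PairSelection.
Variables (R : realFieldType) (n p k1 k2 : nat) (D : svm_data R n p k1 k2).

Lemma Delta_pair_gt0_grad_lt (v g : 'cV[R]_n) i j : 0 < Delta_pair D v g ->
  is_argmin (Iup D v) (fun l => g l ord0) i ->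
  is_argmax (Ilow v) (fun l => g l ord0) j -> g i ord0 < g j ord0.
Proof.
rewrite /Delta_pair; case min_eq: (min_on (Iup D v) (fun l => g l ord0)) => [m|];
  case max_eq: (max_on (Ilow v) (fun l => g l ord0)) => [M|];
  rewrite ?ltxx // lt_max ltxx orbF subr_gt0 => m_lt_M argmin_i argmax_j.
apply: le_lt_trans (argmin_le_min_on argmin_i min_eq) _.
exact: lt_le_trans m_lt_M (max_on_le_argmax argmax_j max_eq).
Qed.

Lemma pair_update_spec (v g : 'cV[R]_n) i j :
  (forall i j : 'I_n, row i (dX D) = row j (dX D) -> i = j) ->
  (forall l, 0 <= v l ord0 <= dC D / n%:R) -> 0 < Delta_pair D v g ->
  is_argmin (Iup D v) (fun l => g l ord0) i ->
  is_argmax (Ilow v) (fun l => g l ord0) j ->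
  pair_update D v g i j <> v /\
  ~ violating D (pair_update D v g i j) (g + Qm D *m (pair_update D v g i j - v)) i j.
Proof.
move=> X_inj v_box Delta_gt0 argmin_i argmax_j.
have gap := Delta_pair_gt0_grad_lt Delta_gt0 argmin_i argmax_j.
have i_neq_j : i != j by apply: contraTneq gap => ->; rewrite ltxx.
have eta_gt0 : 0 < Qm D i i + Qm D j j - 2 * Qm D i j.
  by apply: gram_pair_gt0; apply: contra i_neq_j => /eqP /X_inj ->.
case: argmin_i argmax_j => i_up _ [j_low _].
by split; [apply: pair_update_neq | apply: pair_update_not_violating].
Qed.

End PairSelection.

Lemma coord_update_grad (R : realFieldType) (m : nat) (Q : 'M[R]_m) (w g : 'cV[R]_m) u x :
  (g + Q *m (\col_s (if s == u then x else w s ord0) - w)) u ord0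
  = g u ord0 + (x - w u ord0) * Q u u.
Proof.
have -> : \col_s (if s == u then x else w s ord0) - w = (x - w u ord0) *: delta_mx u 0.
  apply/matrixP => s c; rewrite (ord1 c) !mxE /= andbT.
  by case: (eqVneq s u) => [->|_] /=; ring.
by rewrite -scalemxAr -colE !mxE.
Qed.

Lemma projected_newton_grad_ge0 (R : realFieldType) (a g x : R) :
  0 < a -> 0 <= g + (Num.max (x - g / a) 0 - x) * a.
Proof.
move=> a_gt0; rewrite -lerBlDl sub0r -(divfK (lt0r_neq0 a_gt0) (- g)) ler_pM2r //.
by rewrite lerBrDr le_max mulNr addrC lexx.
Qed.

Theorem proposition3p1 (R : realFieldType) (n p k1 k2 : nat)
  (D : svm_data R n p k1 k2) (tau : R) (th : dual R n k1 k2)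
  (c : block n k1 k2) (th' : dual R n k1 k2) :
  (0 < n)%N -> (0 < p)%N -> (0 < k1)%N -> (0 < k2)%N ->
  0 < dC D -> 0 < dnu D <= 1 ->
  (forall i j : 'I_n, row i (dX D) = row j (dX D) -> i = j) ->
  (forall s : 'I_k1, row s (dA D) != 0) ->
  (forall s : 'I_k2, row s (dG D) != 0) ->
  0 <= tau ->
  feasible D th ->
  smo_step D tau th c th' ->
  match c with
  | BAl i j => al th' <> al th /\ ~ violating D (al th') (grad_al D th') i j
  | BAls i j => als th' <> als th /\ ~ violating D (als th') (grad_als D th') i j
  | BGa u => 0 <= grad_ga D th' u ord0
  | BMu u => grad_mu D th' u ord0 = 0
  end.
Proof.
move=> _ _ _ _ _ _ X_inj A_rows G_rows tau_ge0 [al_box als_box _ _ _] [tau_lt].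
have Delta_gt0 : 0 < Delta D th by apply: le_lt_trans tau_lt.
case: c => [i j|i j|u|u].
- case=> Delta1_eq argmin_i argmax_j ->; rewrite grad_al_update.
  by apply: pair_update_spec; rewrite // -[Delta_pair _ _ _]/(Delta1 D th) Delta1_eq.
- case=> _ Delta2_eq argmin_i argmax_j ->; rewrite grad_als_update.
  by apply: pair_update_spec; rewrite // -[Delta_pair _ _ _]/(Delta2 D th) Delta2_eq.
- case=> _ _ _ _ ->; rewrite grad_ga_update coord_update_grad.
  exact/projected_newton_grad_ge0/gram_diag_gt0.
- case=> _ _ _ ->; rewrite grad_mu_update coord_update_grad.
  by rewrite addrAC subrr add0r mulNr divfK ?subrr // gt_eqF ?gram_diag_gt0.
Qed.
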